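(* Let $X$ be a compact subset of $\mathbb{C}^2$, let $m,n$ be positive integers, and let $\pi:\mathbb{C}^2\to\mathbb{C}^2$ be defined by $\pi(z,w)=(z^m,w^n)$. Suppose $\pi^{-1}(X)=\bigcup_{1\le k\le m,\,1\le l\le n}X_{kl}$, where $X_{11}$ is compact and $$X_{kl}=\Big\{\Big(e^{2\pi i(k-1)/m}z,\; e^{2\pi i(l-1)/n}w\Big): (z,w)\in X_{11}\Big\}\quad (1\le k\le m,\ 1\le l\le n).$$ If $R(\pi^{-1}(X))=C(\pi^{-1}(X))$, then $R(X)=C(X)$.
   Context: For a compact set $K\subset\mathbb{C}^2$: $C(K)$ is the algebra of continuous complex-valued functions on $K$ with the sup norm, and $R(K)$ is the closure in $C(K)$ of the rational functions with poles off $K$. *)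

From HB Require Import structures.
From mathcomp Require Import all_boot all_order all_algebra.
From mathcomp Require Import all_classical all_reals all_analysis.
From mathcomp Require Import complex.
Import numFieldNormedType.Exports.
Import Order.TTheory GRing.Theory Num.Theory.
Local Open Scope ring_scope.
Local Open Scope classical_set_scope.

Set Implicit Arguments.
Unset Strict Implicit.
Unset Printing Implicit Defensive.

Definition Cx (R : realType) := (R[i])^o.
Definition C2 (R : realType) := (Cx R * Cx R)%type.

(* Evaluation of a polynomial in two variables (z,w):
   p = sum_j p_j(z) w^j with p : {poly {poly C}}. *)
Definition ev2 (R : realType) (p : {poly {poly R[i]}}) (x : C2 R) : R[i] :=
  (p.[(x.2 : R[i])%:P]).[x.1 : R[i]].

Definition inC (R : realType) (K : set (C2 R)) (f : C2 R -> Cx R) : Prop :=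
  {within K, continuous f}.

Definition inRat (R : realType) (K : set (C2 R)) (f : C2 R -> Cx R) : Prop :=
  forall e : R, 0 < e ->
    exists p q : {poly {poly R[i]}},
      (forall x, K x -> ev2 q x != 0) /\
      (forall x, K x -> `|(f x : R[i]) - ev2 p x / ev2 q x| < (e%:C)%C).

Definition R_eq_C (R : realType) (K : set (C2 R)) : Prop :=
  forall f : C2 R -> Cx R, inRat K f <-> inC K f.

Definition expi (R : realType) (t : R) : R[i] := Complex (cos t) (sin t).

Definition unity_rt (R : realType) (m j : nat) : R[i] :=
  expi ((2 * pi * j%:R / m%:R) : R).

Definition powmap (R : realType) (m n : nat) (x : C2 R) : C2 R :=
  (((x.1 : R[i]) ^+ m : Cx R), ((x.2 : R[i]) ^+ n : Cx R)).

(* X_{kl} for k,l starting at 1: here k = k'+1, l = l'+1 with k' : 'I_m. *)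
Definition rot_set (R : realType) (m n : nat) (k l : nat) (X11 : set (C2 R))
  : set (C2 R) :=
  [set x | exists2 y, X11 y &
     x = ((unity_rt R m k * (y.1 : R[i]) : Cx R),
          (unity_rt R n l * (y.2 : R[i]) : Cx R))].

From HB Require Import structures.
From mathcomp Require Import all_boot all_order all_algebra.
From mathcomp Require Import all_classical all_reals all_analysis.
From mathcomp Require Import complex.
From mathcomp Require Import ring lra.
Import numFieldNormedType.Exports.
Import Order.TTheory GRing.Theory Num.Theory.
Local Open Scope ring_scope.
Local Open Scope classical_set_scope.

Set Implicit Arguments.
Unset Strict Implicit.
Unset Printing Implicit Defensive.

(** Let G be the group of pairs (u, v) of m-th and n-th roots of unity, acting
    on C^2 by (z, w) |-> (u z, v w).  The map pi is G-invariant and onto, so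
    pi^-1(X) is a union of G-orbits.  Rational functions are continuous, hence
    R(X) is always contained in C(X).  Conversely, given f in C(X), approximate
    f o pi on pi^-1(X) by p/q and average p/q over G.  The average is a quotient
    of G-invariant polynomials, and by the character sums of the roots of unity
    a G-invariant polynomial only involves the monomials z^(m i) w^(n j), i.e.
    it is P o pi for a polynomial P.  The average thus descends to a rational
    function on X, which is close to f because every term of the average is. *)

Section UnityRoot.
Variable R : realType.

Lemma cos_neq1 (t : R) : 0 < t < pi *+ 2 -> cos t != 1.
Proof.
have pi_ge0 : 0 <= pi :> R by exact/ltW/pi_gt0.
have cos_lt1 (s : R) : 0 < s <= pi -> cos s < 1.
  case/andP=> s_gt0 s_lepi.
  by rewrite -cos0 ltr_cos // !in_itv /= ?lexx ?(ltW s_gt0) ?s_lepi ?pi_ge0.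
case/andP=> t_gt0 t_lt2pi; have [t_lepi | pi_ltt] := lerP t pi.
  by rewrite lt_eqF // cos_lt1 ?t_gt0.
rewrite -cosN -(cosD2pi (- t)) lt_eqF // cos_lt1 // addrC subr_gt0 t_lt2pi /=.
lra.
Qed.

Lemma expiD (s t : R) : expi (s + t) = expi s * expi t.
Proof. by rewrite /expi cosD sinD; apply/eqP; rewrite eq_complex /= !eqxx /= addrC. Qed.

Lemma expiMn (t : R) k : expi t ^+ k = expi (t *+ k).
Proof.
elim: k => [|k IH]; first by rewrite mulr0n /expi cos0 sin0.
by rewrite exprS IH mulrS expiD.
Qed.

Lemma unity_rt_primitive m : (0 < m)%N -> m.-primitive_root (unity_rt R m 1).
Proof.
move=> m_gt0; have m0 : m%:R != 0 :> R by rewrite pnatr_eq0 -lt0n.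
have wE k : unity_rt R m 1 ^+ k = expi (pi *+ 2 * (k%:R / m%:R)).
  by rewrite /unity_rt expiMn -mulr_natr; congr expi; rewrite mulr2n; field.
have wm1 : unity_rt R m 1 ^+ m = 1 by rewrite wE divff // mulr1 /expi cos2pi sin2pi.
have [d prim_d d_dvd_m] := prim_order_exists m_gt0 wm1.
suff d_eq_m : d = m by move: prim_d; rewrite d_eq_m.
apply/eqP; rewrite eqn_leq dvdn_leq //= leqNgt; apply/negP => d_lt_m.
have d_gt0 := prim_order_gt0 prim_d.
have : cos ((pi : R) *+ 2 * (d%:R / m%:R)) != 1.
  have pi2_gt0 : 0 < (pi : R) *+ 2 by rewrite mulrn_wgt0 ?pi_gt0.
  apply: cos_neq1; rewrite pmulr_rgt0 ?divr_gt0 ?ltr0n //= gtr_pMr //.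
  by rewrite ltr_pdivrMr ?ltr0n // mul1r ltr_nat.
have := prim_expr_order prim_d; rewrite wE => /(congr1 (@complex.Re R)) /= ->.
by rewrite eqxx.
Qed.
End UnityRoot.

Section Decimation.
Variable A : comNzRingType.
Implicit Types (p : {poly A}).

Definition decimate m p : {poly A} :=
  \sum_(i < size p | (m %| i)%N) p`_i *: 'X^(i %/ m).

Lemma decimate0 m : decimate m 0 = 0.
Proof. by rewrite /decimate size_poly0 big_ord0. Qed.

Lemma horner_decimate_wide m p z N : (size p <= N)%N ->
  (decimate m p).[z ^+ m] = \sum_(i < N | (m %| i)%N) p`_i * z ^+ i.
Proof.
move=> le_p_N; rewrite /decimate horner_sum.
rewrite (@big_ord_widen_cond _ _ _ _ N (dvdn m)
  (fun i => (p`_i *: 'X^(i %/ m)).[z ^+ m]) le_p_N).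
rewrite [RHS](bigID (fun i : 'I_N => (i < size p)%N)) /=.
rewrite [X in _ = _ + X]big1 ?addr0 => [|i /andP[_]]; last first.
  by rewrite -leqNgt => /(nth_default 0) ->; rewrite mul0r.
apply: eq_big => // i /andP[m_dvd_i _].
by rewrite hornerZ hornerXn -exprM mulnC divnK.
Qed.

End Decimation.

Definition decimate2 (A : comNzRingType) m n (P : {poly {poly A}}) :=
  decimate n (map_poly (decimate m) P).

Section RootsOfUnityFilter.
Variable A : idomainType.
Implicit Types (p : {poly A}).

Lemma sum_prim_root_expr m (w : A) i : m.-primitive_root w ->
  \sum_(k < m) (w ^+ k) ^+ i = if (m %| i)%N then m%:R else 0.
Proof.
move=> prim_w; under eq_bigr do rewrite -exprM mulnC exprM.
case: ifPn => [m_dvd_i | m_ndvd_i].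
  rewrite (prim_order_dvd prim_w) in m_dvd_i.
  rewrite (eqP m_dvd_i) (eq_bigr (fun=> 1)) => [|k _]; last exact: expr1n.
  by rewrite sumr_const card_ord.
have wi_neq1 : w ^+ i != 1 by rewrite -(prim_order_dvd prim_w).
have : (w ^+ i - 1) * \sum_(k < m) (w ^+ i) ^+ k = 0.
  by rewrite -subrX1 -exprM mulnC exprM (prim_expr_order prim_w) expr1n subrr.
by move/eqP; rewrite mulf_eq0 subr_eq0 (negbTE wi_neq1) => /eqP.
Qed.

Lemma sum_horner_prim_root m (w : A) p z : m.-primitive_root w ->
  \sum_(k < m) p.[w ^+ k * z] = m%:R * (decimate m p).[z ^+ m].
Proof.
move=> prim_w; rewrite (horner_decimate_wide _ _ (leqnn (size p))).
rewrite mulr_sumr [RHS]big_mkcond /=; under eq_bigr do rewrite horner_coef.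
rewrite exchange_big /=; apply: eq_bigr => i _.
under eq_bigr do rewrite exprMn mulrCA.
by rewrite -mulr_suml sum_prim_root_expr //; case: ifP; rewrite ?mul0r.
Qed.

End RootsOfUnityFilter.

Section BivariateRootsOfUnityFilter.
Variable A : idomainType.
Variables (m n : nat) (w e : A).
Hypotheses (prim_w : m.-primitive_root w) (prim_e : n.-primitive_root e).
Implicit Types (P : {poly {poly A}}) (x y : A).

Lemma horner2_coef P x y :
  (P.[y%:P]).[x] = \sum_(j < size P) (P`_j).[x] * y ^+ j.
Proof.
rewrite (horner_coef P) horner_sum; apply: eq_bigr => j _.
by rewrite -rmorphXn hornerM hornerC.
Qed.

Lemma horner2_decimate2 P x y :
  ((decimate2 m n P).[(y ^+ n)%:P]).[x ^+ m] =
  \sum_(j < size P | (n %| j)%N) (decimate m P`_j).[x ^+ m] * y ^+ j.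
Proof.
rewrite rmorphXn (horner_decimate_wide _ _ (size_poly _ _)) horner_sum.
apply: eq_bigr => j _.
by rewrite coef_map_id0 ?decimate0 // -rmorphXn hornerM hornerC.
Qed.

Lemma sum_horner2_prim_roots P x y :
  \sum_(k < m) \sum_(l < n) (P.[(e ^+ l * y)%:P]).[w ^+ k * x] =
  (m * n)%:R * ((decimate2 m n P).[(y ^+ n)%:P]).[x ^+ m].
Proof.
rewrite horner2_decimate2 mulr_sumr [RHS]big_mkcond /=.
under eq_bigr do under eq_bigr do rewrite horner2_coef.
under eq_bigr do rewrite exchange_big.
rewrite exchange_big; apply: eq_bigr => j _ /=.
rewrite -big_distrlr /= sum_horner_prim_root //.
under eq_bigr do rewrite exprMn.
rewrite -mulr_suml sum_prim_root_expr //; case: ifP => _; rewrite ?natrM; ring.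
Qed.

End BivariateRootsOfUnityFilter.

Definition scale2 (A : comNzRingType) (a b : A) (P : {poly {poly A}}) :=
  map_poly (comp_poly (a *: 'X)) (P \Po (b%:P *: 'X)).

Lemma horner2_scale2 (A : comNzRingType) (a b : A) P x y :
  ((scale2 a b P).[y%:P]).[x] = (P.[(b * y)%:P]).[a * x].
Proof.
rewrite /scale2 -{1}[y%:P](comp_polyC _ (a *: 'X)) horner_map /= horner_comp.
by rewrite hornerZ hornerX horner_comp hornerZ hornerX polyCM.
Qed.

Section Ev2.
Variable R : realType.
Implicit Types (P Q : {poly {poly R[i]}}) (x : C2 R).

Let ev2_rmorphism x : {rmorphism {poly {poly R[i]}} -> R[i]} :=
  horner_eval (x.1 : R[i]) \o horner_eval (x.2 : R[i])%:P.

Lemma ev2C (c : R[i]) x : ev2 c%:P%:P x = c.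
Proof. by rewrite /ev2 !hornerC. Qed.

Lemma ev2M P Q x : ev2 (P * Q) x = ev2 P x * ev2 Q x.
Proof. exact: (rmorphM (ev2_rmorphism x)). Qed.

Lemma ev2_sum (I : Type) (r : seq I) (B : pred I) (F : I -> {poly {poly R[i]}}) x :
  ev2 (\sum_(i <- r | B i) F i) x = \sum_(i <- r | B i) ev2 (F i) x.
Proof. exact: (rmorph_sum (ev2_rmorphism x)). Qed.

Lemma ev2_prod (I : Type) (r : seq I) (B : pred I) (F : I -> {poly {poly R[i]}}) x :
  ev2 (\prod_(i <- r | B i) F i) x = \prod_(i <- r | B i) ev2 (F i) x.
Proof. exact: (rmorph_prod (ev2_rmorphism x)). Qed.

End Ev2.

Section Orbit.
Variable R : realType.
Local Notation C := R[i].
Variables (m n : nat) (w e : C).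
Hypotheses (prim_w : m.+1.-primitive_root w) (prim_e : n.+1.-primitive_root e).
(* The group element (w ^+ k, e ^+ l) is encoded by (k, l); the exponents range
   over 'I_m.+1 * 'I_n.+1 so that the group law is the addition of this zmodType. *)
Local Notation G := ('I_m.+1 * 'I_n.+1)%type.
Local Notation pi := (powmap m.+1 n.+1).
Implicit Types (P p q : {poly {poly C}}) (x : C2 R).

Definition rot (h : G) x : C2 R :=
  ((w ^+ h.1 * x.1 : C) : Cx R, (e ^+ h.2 * x.2 : C) : Cx R).

Definition rot_poly (h : G) P := scale2 (w ^+ h.1) (e ^+ h.2) P.

Lemma ev2_rot_poly h P x : ev2 (rot_poly h P) x = ev2 P (rot h x).
Proof. exact: horner2_scale2. Qed.

Lemma rotD g h x : rot g (rot h x) = rot (g + h) x.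
Proof.
rewrite /rot /= (prim_expr_mod prim_w) (prim_expr_mod prim_e) !exprD.
by rewrite !mulrA.
Qed.

Lemma powmap_rot h x : pi (rot h x) = pi x.
Proof.
rewrite /powmap /rot /= !exprMn -!exprM mulnC exprM (prim_expr_order prim_w).
by rewrite mulnC exprM (prim_expr_order prim_e) !expr1n !mul1r.
Qed.

Lemma big_rot (T : Type) (idx : T) (op : Monoid.com_law idx) (F : C2 R -> T) g x :
  \big[op/idx]_(h : G) F (rot h (rot g x)) = \big[op/idx]_(h : G) F (rot h x).
Proof.
under eq_bigr do rewrite rotD.
by rewrite [RHS](reindex_inj (addIr g)).
Qed.

Lemma sum_ev2_rot P x :
  \sum_(h : G) ev2 P (rot h x) = #|{: G}|%:R * ev2 (decimate2 m.+1 n.+1 P) (pi x).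
Proof.
rewrite -(pair_bigA _ (fun k l => ev2 P (rot (k, l) x))) card_prod !card_ord.
exact: sum_horner2_prim_roots.
Qed.

Lemma ev2_decimate2_invariant P x : (forall h, ev2 P (rot h x) = ev2 P x) ->
  ev2 (decimate2 m.+1 n.+1 P) (pi x) = ev2 P x.
Proof.
move=> P_inv; apply: (mulfI (_ : #|{: G}|%:R != 0)).
  by rewrite pnatr_eq0 -lt0n card_prod !card_ord muln_gt0.
rewrite -sum_ev2_rot (eq_bigr _ (fun h _ => P_inv h)) sumr_const.
by rewrite card_prod !card_ord mulr_natl.
Qed.

Definition orbit_den q := \prod_(h : G) rot_poly h q.

Definition orbit_num p q :=
  (#|{: G}|%:R^-1)%:P%:P * \sum_(h : G) rot_poly h p * \prod_(g | g != h) rot_poly g q.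

Lemma ev2_orbit_den q x : ev2 (orbit_den q) x = \prod_(h : G) ev2 q (rot h x).
Proof. by rewrite ev2_prod; under eq_bigr do rewrite ev2_rot_poly. Qed.

Lemma ev2_orbit_num p q x : (forall h, ev2 q (rot h x) != 0) ->
  ev2 (orbit_num p q) x = ev2 (orbit_den q) x *
    (#|{: G}|%:R^-1 * \sum_(h : G) ev2 p (rot h x) / ev2 q (rot h x)).
Proof.
move=> q_nz; rewrite ev2M ev2C ev2_sum mulrCA; congr (_ * _).
rewrite mulr_sumr; apply: eq_bigr => h _.
rewrite ev2M ev2_prod ev2_rot_poly ev2_orbit_den [in RHS](bigD1 h) //=.
under eq_bigr do rewrite ev2_rot_poly.
by field; exact: q_nz.
Qed.

Lemma orbit_average p q x : (forall h, ev2 q (rot h x) != 0) ->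
  let N := decimate2 m.+1 n.+1 (orbit_num p q) in
  let Q := decimate2 m.+1 n.+1 (orbit_den q) in
  ev2 Q (pi x) != 0 /\
  ev2 N (pi x) / ev2 Q (pi x) =
    #|{: G}|%:R^-1 * \sum_(h : G) ev2 p (rot h x) / ev2 q (rot h x).
Proof.
move=> q_nz N Q.
have q_nz_rot g h : ev2 q (rot h (rot g x)) != 0 by rewrite rotD.
have den_inv g : ev2 (orbit_den q) (rot g x) = ev2 (orbit_den q) x.
  by rewrite !ev2_orbit_den big_rot.
have num_inv g : ev2 (orbit_num p q) (rot g x) = ev2 (orbit_num p q) x.
  rewrite !ev2_orbit_num // den_inv.
  by rewrite (big_rot _ (fun y => ev2 p y / ev2 q y)).
have den_nz : ev2 (orbit_den q) x != 0.
  by rewrite ev2_orbit_den; apply/prodf_neq0 => h _.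
rewrite /N /Q !ev2_decimate2_invariant // ev2_orbit_num //.
by rewrite mulrC mulKf.
Qed.

End Orbit.

Lemma continuous_horner_num (K : numFieldType) (p : {poly K}) :
  continuous (horner p : K^o -> K^o).
Proof.
elim/poly_ind: p => [|p c IHp] z.
  have -> : horner 0 = cst 0 :> (K^o -> K^o) by apply/funext => y; rewrite horner0.
  exact: cst_continuous.
have -> : horner (p * 'X + c%:P) = horner p \* id + cst c :> (K^o -> K^o).
  by apply/funext => y; rewrite hornerMXaddC.
apply: continuousD; last exact: cst_continuous.
by apply: continuousM; [exact: IHp | exact: cvg_id].
Qed.

Lemma within_continuous_preimage {U V W : topologicalType}
    (phi : U -> V) (g : V -> W) (B : set V) :
  continuous phi -> {within B, continuous g} ->
  {within phi @^-1` B, continuous (g \o phi)}.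
Proof.
move=> phi_cont /subspace_continuousP g_cont; apply/subspace_continuousP => x Bphix.
apply: (cvg_comp _ _ _ (g_cont _ Bphix)) => Q.
exact: (phi_cont x).
Qed.

Lemma within_continuous_uniform_approx {T : topologicalType} {K : numFieldType}
    (A : set T) (f : T -> K^o) :
  (forall e : K, 0 < e ->
     exists2 g : T -> K^o, {within A, continuous g} & forall x, A x -> `|f x - g x| < e) ->
  {within A, continuous f}.
Proof.
move=> approx; apply/subspace_continuousP => x Ax; apply/cvgrPdist_lt => e e_gt0.
have e3_gt0 : 0 < e / 3%:R by rewrite divr_gt0 ?ltr0n.
have [g /subspace_continuousP g_cont f_g] := approx _ e3_gt0.
have /cvgrPdist_lt/(_ _ e3_gt0) g_near := g_cont x Ax.
near=> t.
have At : A t by near: t; exact: near_withinT.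
have g_xt : `|g x - g t| < e / 3%:R by near: t; exact: g_near.
have -> : f x - f t = (f x - g x) + (g x - g t) - (f t - g t) by ring.
rewrite [e](_ : _ = e / 3%:R + e / 3%:R + e / 3%:R); last by field.
apply: (le_lt_trans (ler_normB _ _)); rewrite ltrD ?f_g //.
by apply: (le_lt_trans (ler_normD _ _)); rewrite ltrD ?f_g.
Unshelve. all: by end_near.
Qed.

Section RationalApproximation.
Variable R : realType.
Local Notation C := R[i].
Implicit Types (P p q : {poly {poly C}}) (K : set (C2 R)).

Lemma continuous_ev2 P : continuous (fun x : C2 R => ev2 P x : Cx R).
Proof.
elim/poly_ind: P => [|P c IHP] x.
  have -> : (fun x : C2 R => ev2 0 x : Cx R) = cst 0.
    by apply/funext => y; rewrite /ev2 !horner0.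
  exact: cst_continuous.
have -> : (fun x : C2 R => ev2 (P * 'X + c%:P) x : Cx R) =
    (fun x : C2 R => ev2 P x : Cx R) \* snd + ((horner c : Cx R -> Cx R) \o fst).
  by apply/funext => y; rewrite /ev2 /= hornerMXaddC hornerD hornerM !hornerC.
apply: continuousD; first by apply: continuousM; [exact: IHP | exact: cvg_snd].
by apply: continuous_comp; [exact: cvg_fst | exact: continuous_horner_num].
Qed.

Lemma continuous_powmap m n : continuous (powmap m n : C2 R -> C2 R).
Proof.
have -> : powmap m n = (fun x : C2 R =>
    (((horner 'X^m : Cx R -> Cx R) \o fst) x, ((horner 'X^n : Cx R -> Cx R) \o snd) x)).
  by apply/funext => x; rewrite /powmap /= !hornerXn.
move=> x.
have c1 : {for x, continuous ((horner 'X^m : Cx R -> Cx R) \o fst)}.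
  by apply: continuous_comp; [exact: cvg_fst | exact: continuous_horner_num].
have c2 : {for x, continuous ((horner 'X^n : Cx R -> Cx R) \o snd)}.
  by apply: continuous_comp; [exact: cvg_snd | exact: continuous_horner_num].
exact: (cvg_pair c1 c2).
Qed.

Lemma inRat_inC K f : inRat K f -> inC K f.
Proof.
move=> f_rat; apply: within_continuous_uniform_approx => e e_gt0.
have [e_real e_gt0'] : e = ((complex.Re e)%:C)%C /\ 0 < complex.Re e.
  move: e_gt0; rewrite ltcE => /andP[/eqP Im_e Re_gt0].
  by case: e Im_e Re_gt0 => a b /= ->.
have [p [q [q_nz f_pq]]] := f_rat _ e_gt0'.
exists (fun x => ev2 p x / ev2 q x : Cx R); last by rewrite e_real.
apply: continuous_in_subspaceT => x /[!inE] Kx.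
apply: continuousM; first exact: continuous_ev2.
by apply: continuousV; [exact: q_nz | exact: continuous_ev2].
Qed.

End RationalApproximation.

Lemma powmap_surjective (R : realType) m n : (0 < m)%N -> (0 < n)%N ->
  forall y : C2 R, exists x, powmap m n x = y.
Proof.
move=> m_gt0 n_gt0 [y1 y2].
exists ((m.-root (y1 : R[i]) : Cx R), (n.-root (y2 : R[i]) : Cx R)).
by rewrite /powmap /= !rootCK.
Qed.

Lemma norm_sub_mean_lt (K : numFieldType) (I : finType) (a E : K) (r : I -> K) :
  (0 < #|I|)%N -> (forall i, `|a - r i| < E) -> `|a - #|I|%:R^-1 * \sum_i r i| < E.
Proof.
move=> I_gt0 r_near; have card_gt0 : 0 < #|I|%:R :> K by rewrite ltr0n.
have -> : a - #|I|%:R^-1 * \sum_i r i = #|I|%:R^-1 * \sum_i (a - r i).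
  by rewrite sumrB sumr_const mulrBr -[a *+ _]mulr_natl mulKf ?lt0r_neq0.
rewrite normrM ger0_norm ?invr_ge0 ?ltW // -(ltr_pM2l card_gt0) mulrA mulfV ?lt0r_neq0 //.
rewrite mul1r mulr_natl -sumr_const; apply: (le_lt_trans (ler_norm_sum _ _ _)).
have [i0 _] := card_gt0P I_gt0.
apply: ltr_sum => [|i _]; last exact: r_near.
by apply/hasP; exists i0; rewrite ?mem_index_enum.
Qed.

Theorem lemma3p3 (R : realType) (X X11 : set (C2 R)) (m n : nat)
  (hm : (0 < m)%N) (hn : (0 < n)%N)
  (cX : compact X) (cX11 : compact X11)
  (hdecomp : powmap m n @^-1` X =
     \bigcup_(k in [set k : nat | (k < m)%N])
       \bigcup_(l in [set l : nat | (l < n)%N]) rot_set m n k l X11) :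
  R_eq_C (powmap m n @^-1` X) -> R_eq_C X.
Proof.
clear cX cX11 hdecomp.
case: m hm => // m _; case: n hn => // n _.
move=> RC_preimage f; split; first exact: inRat_inC.
move=> f_cont eps eps_gt0.
have := within_continuous_preimage (@continuous_powmap R m.+1 n.+1) f_cont.
move=> /(RC_preimage _).2 /(_ eps eps_gt0) [p [q [q_nz f_pq]]].
have prim_w := unity_rt_primitive R (ltn0Sn m).
have prim_e := unity_rt_primitive R (ltn0Sn n).
pose w := unity_rt R m.+1 1; pose e := unity_rt R n.+1 1.
exists (decimate2 m.+1 n.+1 (orbit_num m n w e p q)),
       (decimate2 m.+1 n.+1 (orbit_den m n w e q)).
have average y : X y -> exists2 x, powmap m.+1 n.+1 x = y &
    forall h : 'I_m.+1 * 'I_n.+1, (powmap m.+1 n.+1 @^-1` X) (rot w e h x).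
  move=> Xy; have [x px] := @powmap_surjective R _ _ (ltn0Sn m) (ltn0Sn n) y.
  by exists x => // h; rewrite /preimage /= (powmap_rot prim_w prim_e) px.
split=> y /average [x <- orbit_X];
  have [Q_nz average_pq] := orbit_average prim_w prim_e p (fun h => q_nz _ (orbit_X h)).
  exact: Q_nz.
rewrite average_pq; apply: norm_sub_mean_lt => [|h]; first by rewrite card_prod !card_ord.
by rewrite -(powmap_rot prim_w prim_e h); exact: f_pq.
Qed.
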